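(* Let $v \ge 240$ be an integer. Then \[ \beta(4,v,4) \le \left\lfloor \frac{4v-10}{3} \right\rfloor, \] and \[ \beta(4,v,4) \ge \begin{cases} \frac{4v-21}{3} & \text{if } v \equiv 0 \pmod 3,\\ \frac{4v-13}{3} & \text{if } v \equiv 1 \pmod 3,\\ \frac{4v-17}{3} & \text{if } v \equiv 2 \pmod 3. \end{cases} \]
   Context: For integers $v \ge k \ge 2$, a $(v,k)$-packing is a pair $(X,\mathcal{B})$ where $X$ is a set of $v$ points and $\mathcal{B}$ is a set of $k$-subsets of $X$ (blocks) such that every pair of distinct points lies in at most one block. A partial parallel class (PPC) is a set of pairwise disjoint blocks; its size is the number of blocks. A PPC of size $\rho$ is maximum if the packing has no PPC of size $\rho+1$. $\beta(\rho,v,k)$ denotes the maximum number of blocks in a $(v,k)$-packing in which the maximum PPC has size $\rho$. *)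

From mathcomp Require Import all_boot.
Set Implicit Arguments. Unset Strict Implicit. Unset Printing Implicit Defensive.

Definition is_packing (v k : nat) (B : {set {set 'I_v}}) : bool :=
  [forall b in B, #|b| == k] &&
  [forall x : 'I_v, forall y : 'I_v,
     (x != y) ==> (#|[set b in B | (x \in b) && (y \in b)]| <= 1)].

Definition is_ppc (v : nat) (B P : {set {set 'I_v}}) : bool :=
  (P \subset B) &&
  [forall b1 in P, forall b2 in P, (b1 != b2) ==> [disjoint b1 & b2]].

Definition max_ppc_size (v : nat) (B : {set {set 'I_v}}) : nat :=
  \max_(P : {set {set 'I_v}} | is_ppc B P) #|P|.

(* beta(rho, v, k): maximum number of blocks of a (v,k)-packing whose maximum
   PPC has size rho (0 if there is no such packing). *)
Definition beta (rho v k : nat) : nat :=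
  \max_(B : {set {set 'I_v}} | is_packing k B && (max_ppc_size B == rho)) #|B|.

From mathcomp Require Import all_boot zify.
Set Implicit Arguments. Unset Strict Implicit. Unset Printing Implicit Defensive.

(* Upper bound: fix a maximum partial parallel class P, four disjoint blocks
   covering 16 points, and call a block private to x when it meets cover P in x
   only.  If the blocks of P met by a block D contain points outside D with many
   private blocks, these blocks of P can be traded for pairwise disjoint private
   blocks avoiding D, and adding D gives a larger class.  Hence each block of P
   has at most one heavy point (more than 16 private blocks), every block meets a
   heavy point or one of the l blocks of P without heavy point, and each of the
   latter meets at most 65 blocks.  Counting pairs (heavy, non-heavy point) inside
   blocks, the r heavy points lie in at most r (v - r) / 3 + 1 blocks, so
   3 |B| <= r (v - r) + 3 + 195 l <= 4 v - 10 as r + l <= 4.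
   Lower bound: on 4 + 3 m points take the hub block {0, 1, 2, 3} together with
   the 4 m lines of slopes a < 4 through hub a and three copies of Z_m.  Every
   block contains a hub, so partial parallel classes have at most 4 blocks, and
   four lines with t = 3 a are disjoint. *)

Section Counting.
Variables (T U : finType) (f : U -> {set T}).

Lemma card_bigcup_leq (I : {set U}) : #|\bigcup_(i in I) f i| <= \sum_(i in I) #|f i|.
Proof.
elim/big_ind2: _ => [|m A n C Am Cn|//]; first by rewrite cards0.
by rewrite (leq_trans (leq_card_setU _ _)) ?leq_add.
Qed.

Lemma card_bigcup_disjoint (I : {set U}) :
  {in I &, forall i j, i != j -> [disjoint f i & f j]} ->
  #|\bigcup_(i in I) f i| = \sum_(i in I) #|f i|.
Proof.
elim: {I}_.+1 {-2}I (ltnSn #|I|) => // n IH I ltIn disjI.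
have [->|[i iI]] := set_0Vmem I; first by rewrite !big_set0 cards0.
rewrite !(big_setD1 _ iI) /= cardsU disjoint_setI0 ?cards0 ?subn0.
  rewrite IH //; first by rewrite (cardsD1 i I) iI in ltIn.
  by move=> j j' /setD1P[_ jI] /setD1P[_ j'I]; apply: disjI.
apply/bigcup_disjoint => j /setD1P[ji jI].
by apply: disjI => //; rewrite eq_sym.
Qed.

Lemma leq_mul_card_disjoint (I : {set U}) (F : {set T}) k :
  {in I &, forall i j, i != j -> [disjoint f i & f j]} ->
  {in I, forall i, f i \subset F} -> {in I, forall i, k <= #|f i|} ->
  k * #|I| <= #|F|.
Proof.
move=> disjI sub_fF le_k.
rewrite mulnC -sum_nat_const (@leq_trans (\sum_(i in I) #|f i|)) ?leq_sum //.
rewrite -card_bigcup_disjoint // subset_leq_card //.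
by apply/bigcupsP => i /sub_fF.
Qed.

End Counting.

Lemma disjointP (T : finType) (A B : {pred T}) :
  reflect (forall x, x \in A -> x \in B -> False) [disjoint A & B].
Proof.
apply: (iffP pred0P) => [AB0 x xA xB | AB x /=]; first by move: (AB0 x); rewrite /= xA xB.
by apply/negbTE/andP => -[/AB].
Qed.

Lemma cover_setU1 (T : finType) (b : {set T}) (Q : {set {set T}}) :
  cover (b |: Q) = b :|: cover Q.
Proof. by rewrite /cover bigcup_setU big_set1. Qed.

Lemma cardsU_disjoint_cover (T : finType) (P Q : {set {set T}}) :
  set0 \notin P -> [disjoint cover P & cover Q] -> #|P :|: Q| = #|P| + #|Q|.
Proof.
move=> P0 disjPQ; rewrite cardsU disjoint_setI0 ?cards0 ?subn0 //.
apply/pred0P => b /=; apply/negbTE/andP => -[bP bQ].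
have /set0Pn[x xb] : b != set0 by apply: contraNneq P0 => <-.
have xP : x \in cover P by apply/bigcupP; exists b.
have xQ : x \in cover Q by apply/bigcupP; exists b.
by rewrite (disjointFr disjPQ xP) in xQ.
Qed.

Section PartialParallelClasses.
Variables (v : nat) (B : {set {set 'I_v}}).

Lemma is_ppcP (P : {set {set 'I_v}}) : reflect (P \subset B /\ trivIset P) (is_ppc B P).
Proof.
apply: (iffP andP) => -[sPB dP]; split=> //.
  apply/trivIsetP => b1 b2 b1P b2P.
  by move/forall_inP/(_ b1 b1P)/forall_inP/(_ b2 b2P)/implyP: dP.
apply/forall_inP => b1 b1P; apply/forall_inP => b2 b2P; apply/implyP.
by move/trivIsetP: dP; apply.
Qed.

Lemma ppc_setU (P Q : {set {set 'I_v}}) :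
  is_ppc B P -> is_ppc B Q -> [disjoint cover P & cover Q] -> is_ppc B (P :|: Q).
Proof.
move=> /is_ppcP[sPB tP] /is_ppcP[sQB tQ] disjPQ; apply/is_ppcP.
by rewrite subUset sPB sQB; split=> //; apply: trivIsetU.
Qed.

Lemma ppc_set0 : is_ppc B set0.
Proof. by apply/is_ppcP; rewrite sub0set; split=> //; apply/trivIsetP => ?; rewrite inE. Qed.

Lemma ppc_set1 b : b \in B -> is_ppc B [set b].
Proof. by move=> bB; apply/is_ppcP; rewrite sub1set bB trivIset1. Qed.

Lemma leq_max_ppc_size (P : {set {set 'I_v}}) : is_ppc B P -> #|P| <= max_ppc_size B.
Proof. exact: leq_bigmax_cond. Qed.

Lemma exists_max_ppc : exists2 P, is_ppc B P & #|P| = max_ppc_size B.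
Proof.
rewrite /max_ppc_size (bigmax_eq_arg set0 ppc_set0).
by case: arg_maxnP => [|P PP _]; [apply: ppc_set0 | exists P].
Qed.

End PartialParallelClasses.

Section Packings.
Variables (v k : nat) (B : {set {set 'I_v}}).
Hypothesis packB : is_packing k B.

Lemma packing_card b : b \in B -> #|b| = k.
Proof. by case/andP: packB => /forall_inP cardB _ /cardB/eqP. Qed.

Lemma packing_pair x y b1 b2 : x != y -> b1 \in B -> b2 \in B ->
  x \in b1 -> y \in b1 -> x \in b2 -> y \in b2 -> b1 = b2.
Proof.
case/andP: packB => _ /forallP/(_ x)/forallP/(_ y) + xy => /implyP/(_ xy)/card_le1_eqP.
by move=> pairB b1B b2B x1 y1 x2 y2; apply: pairB; rewrite inE ?b1B ?b2B ?x1 ?y1 ?x2 ?y2.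
Qed.

Lemma packing_cross_pairs (X : {set 'I_v}) :
  k.-1 * #|[set C in B | ~~ [disjoint C & X] & ~~ (C \subset X)]| <= #|X| * (v - #|X|).
Proof.
have -> : #|X| * (v - #|X|) = #|setX X (~: X)|.
  by rewrite cardsX [#|~: X|]cardsCs setCK card_ord.
apply: (leq_mul_card_disjoint (f := fun C => setX (C :&: X) (C :\: X))).
- move=> C1 C2; rewrite !inE => /andP[C1B _] /andP[C2B _] C12.
  rewrite -setI_eq0; apply: contraNT C12 => /set0Pn[[x z]].
  rewrite !inE /= => /andP[/andP[/andP[x1 xX] /andP[zX z1]] /andP[/andP[x2 _] /andP[_ z2]]].
  have xz : x != z by apply: contraNneq zX => <-.
  by rewrite (packing_pair xz C1B C2B x1 z1 x2 z2).
- by move=> C _; rewrite setXS ?subsetIr // setDE subsetIr.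
move=> C; rewrite !inE -setI_eq0 -setD_eq0 -!card_gt0 => /and3P[CB CX CnX].
have := cardsID X C; rewrite cardsX (packing_card CB); nia.
Qed.

Lemma card_cover_packing (Q : {set {set 'I_v}}) : Q \subset B -> #|cover Q| <= k * #|Q|.
Proof.
move=> /subsetP sQB; rewrite (leq_trans (leq_card_cover Q)) // mulnC -sum_nat_const.
by apply: leq_sum => b /sQB/packing_card ->.
Qed.

Lemma card_blocks_through_meeting y (S : {set 'I_v}) : y \notin S ->
  #|[set C in B | (y \in C) && ~~ [disjoint C & S]]| <= #|S|.
Proof.
move=> yS; rewrite -[#|[set C in B | _]|]mul1n.
apply: (leq_mul_card_disjoint (f := fun C => C :&: S)) => [C1 C2||C].
- rewrite !inE => /andP[C1B /andP[y1 _]] /andP[C2B /andP[y2 _]] C12.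
  rewrite -setI_eq0; apply: contraNT C12 => /set0Pn[t].
  rewrite !inE => /andP[/andP[t1 tS] /andP[t2 _]].
  have ty : t != y by apply: contraNneq yS => <-.
  by rewrite (packing_pair ty C1B C2B t1 y1 t2 y2).
- by move=> C _; apply: subsetIr.
by rewrite inE -setI_eq0 card_gt0 => /and3P[].
Qed.

End Packings.

Definition private_blocks v (B P : {set {set 'I_v}}) (x : 'I_v) : {set {set 'I_v}} :=
  [set C in B | C :&: cover P == [set x]].

Section Exchange.
Variables (v k : nat) (B P : {set {set 'I_v}}).
Hypotheses (k_gt0 : 0 < k) (packB : is_packing k B) (ppcP : is_ppc B P).
Hypothesis maxP : forall R, is_ppc B R -> #|R| <= #|P|.

Let privB := private_blocks B P.

Lemma set0_notin_packing : set0 \notin B.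
Proof. by apply: contraTN k_gt0 => /(packing_card packB); rewrite cards0 => <-. Qed.

Lemma set0_notin_ppc R : is_ppc B R -> set0 \notin R.
Proof. by case/is_ppcP => /subsetP sRB _; apply: contraNN set0_notin_packing => /sRB. Qed.

Lemma private_blockP x C : C \in privB x ->
  [/\ C \in B, x \in C & forall t, t \in C -> t \in cover P -> t = x].
Proof.
rewrite inE => /andP[CB /eqP CP]; have : x \in C :&: cover P by rewrite CP set11.
rewrite inE => /andP[xC _]; split=> // t tC tP.
by apply/set1P; rewrite -CP inE tC.
Qed.

Lemma private_block_cover x b C (R : {set {set 'I_v}}) : C \in privB x ->
  b \in P -> x \in b -> R \subset P -> b \notin R -> [disjoint C & cover R].
Proof.
have /is_ppcP[_ /trivIsetP disjP] := ppcP.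
move=> /private_blockP[_ _ CP] bP xb /subsetP sRP bR.
apply/disjointP => t tC /bigcupP[b' b'R tb'].
have tP : t \in cover P by apply/bigcupP; exists b' => //; apply: sRP.
have bb' : b != b' by apply: contraNneq bR => ->.
by rewrite -(CP t tC tP) (disjointFl (disjP _ _ bP (sRP _ b'R) bb') tb') in xb.
Qed.

Lemma private_block_avoiding x (F : {set 'I_v}) :
  x \notin F -> #|F| < #|privB x| -> exists2 C, C \in privB x & [disjoint C & F].
Proof.
move=> xF ltF; apply/exists_inP; apply: contraTT ltF; rewrite negb_exists_in -leqNgt.
move=> /forall_inP meetF; rewrite -[#|privB x|]mul1n.
apply: (leq_mul_card_disjoint (f := fun C => C :&: F)) => [C1 C2 C1x C2x C12||C /meetF].
- rewrite -setI_eq0; apply: contraNT C12 => /set0Pn[t].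
  rewrite !inE => /andP[/andP[t1 tF] /andP[t2 _]].
  case/private_blockP: C1x => C1B x1 _; case/private_blockP: C2x => C2B x2 _.
  have tx : t != x by apply: contraNneq xF => <-.
  by rewrite (packing_pair packB tx C1B C2B t1 x1 t2 x2).
- by move=> C _; apply: subsetIr.
by rewrite -setI_eq0 card_gt0.
Qed.

(* Greedily, the private block chosen for b must avoid F and the at most
   k * (#|A| - 1) points of the blocks already chosen. *)
Lemma private_transversal (F : {set 'I_v}) (A : {set {set 'I_v}}) (h : {set 'I_v} -> 'I_v) :
  A \subset P ->
  (forall b, b \in A ->
     [/\ h b \in b, h b \notin F & #|F| + k * #|A|.-1 < #|privB (h b)|]) ->
  exists Q, [/\ is_ppc B Q, #|Q| = #|A| & [disjoint cover Q & F :|: cover (P :\: A)]].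
Proof.
elim: {A}_.+1 {-2}A (ltnSn #|A|) => // n IH A ltAn sAP hA.
have [-> | [b bA]] := set_0Vmem A.
  exists set0; rewrite cards0 /cover big_set0 disjoints_subset sub0set.
  by split=> //; apply: ppc_set0.
have cardA : #|A| = #|A :\ b|.+1 by rewrite (cardsD1 b A) bA.
have [|b' /setD1P[_ b'A]|Q [ppcQ cardQ disjQ]] := IH (A :\ b) _ (subset_trans (subD1set A b) sAP).
- by rewrite -ltnS -cardA.
- case: (hA b' b'A) => -> -> /(leq_ltn_trans _)-> //.
  by rewrite leq_add2l leq_mul2l cardA leq_pred orbT.
have bP : b \in P by apply: (subsetP sAP).
have [hb hbF hb_priv] := hA b bA.
have hbQ : h b \notin cover Q.
  rewrite (disjointFl disjQ) // inE; apply/orP; right.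
  by apply/bigcupP; exists b => //; rewrite !inE eqxx bP.
have [C Cpriv CF] : exists2 C, C \in privB (h b) & [disjoint C & F :|: cover Q].
  apply: private_block_avoiding; first by rewrite inE negb_or hbF.
  apply: leq_ltn_trans hb_priv; rewrite cardA /= (leq_trans (leq_card_setU _ _)) //.
  by rewrite leq_add2l -cardQ (card_cover_packing packB) //; case/is_ppcP: ppcQ.
have [CB _ _] := private_blockP Cpriv.
have CQ : [disjoint cover [set C] & cover Q].
  by rewrite cover1; apply: disjointWr CF; apply: subsetUr.
exists (C |: Q); split.
- exact: ppc_setU (ppc_set1 CB) ppcQ CQ.
- by rewrite cardsU_disjoint_cover ?cards1 ?cardQ ?cardA ?set0_notin_ppc ?ppc_set1.
have CPA : [disjoint C & cover (P :\: A)].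
  by apply: (private_block_cover Cpriv bP hb); rewrite ?subsetDl // inE bA.
have sPA : cover (P :\: A) \subset cover (P :\: (A :\ b)).
  apply/bigcupsP => b' /setDP[b'P b'A]; apply: bigcup_sup.
  by rewrite !inE b'P andbT; apply: contraNN b'A => /andP[].
move: disjQ CF; rewrite cover_setU1 -!setI_eq0 setIUl !setIUr !setU_eq0 => /andP[-> QPA].
move=> /andP[-> _]; rewrite !setI_eq0 CPA /=.
by apply: disjointWr sPA _; rewrite -setI_eq0.
Qed.

Lemma no_ppc_exchange (D : {set 'I_v}) (A : {set {set 'I_v}}) (h : {set 'I_v} -> 'I_v) :
  D \in B -> A \subset P -> [disjoint D & cover (P :\: A)] ->
  (forall b, b \in A -> [/\ h b \in b, h b \notin D & k * #|A| < #|privB (h b)|]) -> False.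
Proof.
move=> DB sAP DPA hA.
have [b' b'A | Q [ppcQ cardQ disjQ]] := private_transversal (F := D) (h := h) sAP.
  have [-> -> ltA] := hA b' b'A; split=> //.
  rewrite (packing_card packB DB) -mulnS prednK // card_gt0.
  by apply/set0Pn; exists b'.
have /is_ppcP[sPB tP] := ppcP.
have ppcPA : is_ppc B (P :\: A).
  by apply/is_ppcP; split; [apply: subset_trans (subsetDl P A) sPB | apply: trivIsetD].
have DQ : [disjoint cover [set D] & cover Q].
  by rewrite cover1 disjoint_sym; apply: disjointWr disjQ; apply: subsetUl.
have ppcDQ := ppc_setU (ppc_set1 DB) ppcQ DQ.
have DQ_PA : [disjoint cover (D |: Q) & cover (P :\: A)].
  apply/disjointP => t; rewrite cover_setU1 inE => /orP[tD | tQ] tPA.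
    by rewrite (disjointFr DPA tD) in tPA.
  by move: (disjointFr disjQ tQ); rewrite inE tPA orbT.
have := maxP (ppc_setU ppcDQ ppcPA DQ_PA).
rewrite !cardsU_disjoint_cover ?set0_notin_ppc ?ppc_set1 // cards1 cardQ.
by rewrite cardsD (setIidPr sAP) add1n addSn subnKC ?ltnn ?subset_leq_card.
Qed.

Lemma no_two_private_points b x y : b \in P -> x \in b -> y \in b -> x != y ->
  k < #|privB x| -> 0 < #|privB y| -> False.
Proof.
move=> bP xb yb xy ltx /card_gt0P[D Dy].
have [DB _ DP] := private_blockP Dy.
have xP : x \in cover P by apply/bigcupP; exists b.
apply: (no_ppc_exchange (A := [set b]) (h := fun=> x) DB); rewrite ?sub1set //.
  by apply: (private_block_cover Dy bP yb); rewrite ?subsetDl // !inE eqxx.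
move=> _ /set1P ->; split; rewrite ?cards1 ?muln1 //.
by apply: contra xy => /DP/(_ xP) ->.
Qed.

End Exchange.

Section UpperBound.
Variables (v : nat) (B P : {set {set 'I_v}}).
Hypotheses (packB : is_packing 4 B) (ppcP : is_ppc B P) (cardP : #|P| = 4).
Hypothesis maxP : forall R, is_ppc B R -> #|R| <= #|P|.

Let privB := private_blocks B P.

(* 16 = 4 * #|P| private blocks are enough for any exchange in no_ppc_exchange. *)
Definition heavy := [set x in cover P | 16 < #|privB x|].
Definition light := [set b in P | [disjoint b & heavy]].

Lemma light_subset : light \subset P.
Proof. by apply/subsetP => b; rewrite inE => /andP[]. Qed.

Lemma card_heavy_block b : b \in P -> #|b :&: heavy| <= 1.
Proof.
move=> bP; apply/card_le1_eqP => x y; rewrite !inE => /and3P[xb _ hx] /and3P[yb _ hy].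
apply/eqP/negPn/negP => yx.
apply: (no_two_private_points (k := 4) isT packB ppcP maxP bP yb xb yx).
  exact: leq_trans hy.
exact: leq_trans hx.
Qed.

Lemma card_heavy_light : #|heavy| + #|light| <= 4.
Proof.
have heavyE : heavy \subset \bigcup_(b in P :\: light) (b :&: heavy).
  apply/subsetP => x hx; have := hx; rewrite inE => /andP[/bigcupP[b bP xb] _].
  apply/bigcupP; exists b; last by rewrite inE xb.
  by rewrite !inE bP andbT; apply/negP => /disjointFr/(_ xb); rewrite hx.
have : #|heavy| <= #|P :\: light|.
  apply: leq_trans (subset_leq_card heavyE) _.
  rewrite -[X in _ <= X]sum1_card (leq_trans (card_bigcup_leq _ _)) //.
  by apply: leq_sum => b /setDP[bP _]; apply: card_heavy_block.
rewrite cardsD (setIidPr light_subset) cardP; have := subset_leq_card light_subset.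
by rewrite cardP; clear; lia.
Qed.

Lemma block_meets_heavy_or_light D : D \in B ->
  ~~ [disjoint D & heavy] || [exists b in light, ~~ [disjoint b & D]].
Proof.
move=> DB; apply/norP => -[/negbNE Dheavy /exists_inPn Dlight].
have [y0 _] : exists y0, y0 \in D by apply/set0Pn; rewrite -card_gt0 (packing_card packB DB).
set A := [set b in P | ~~ [disjoint b & D]].
have sAP : A \subset P by apply/subsetP => b; rewrite inE => /andP[].
pose h b := odflt y0 [pick x in b :&: heavy].
apply: (no_ppc_exchange (k := 4) isT packB ppcP maxP (A := A) (h := h) DB sAP).
  apply/disjointP => t tD /bigcupP[b /setDP[bP]]; rewrite inE bP /= => /negbNE bD tb.
  by rewrite (disjointFr bD tb) in tD.
move=> b; rewrite inE => /andP[bP bD].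
have : ~~ [disjoint b & heavy].
  by apply/negP => bheavy; move: (Dlight b); rewrite inE bP bheavy bD => /(_ isT).
rewrite -setI_eq0 => /set0Pn[x0 x0b]; rewrite /h; case: pickP => [x | /(_ x0)]; last by rewrite x0b.
rewrite inE => /andP[xb xheavy]; split=> //.
  by apply: contraTN xheavy => /(disjointFr Dheavy) ->.
have cardA : #|A| <= 4 by rewrite -cardP subset_leq_card.
apply: (@leq_ltn_trans (4 * 4)); first by rewrite leq_mul2l cardA orbT.
by move: xheavy; rewrite inE => /andP[].
Qed.

Lemma sum_private_light b : b \in light -> \sum_(y in b) #|privB y| <= 16.
Proof.
rewrite inE => /andP[bP bheavy].
have bB : b \in B by case/is_ppcP: ppcP => /subsetP/(_ b bP).
have [/exists_inP[y yb ylarge] | /exists_inPn small] := boolP [exists y in b, 4 < #|privB y|].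
  rewrite (big_setD1 y yb) /= big1 ?addn0 => [|z /setD1P[zy zb]].
    have yP : y \in cover P by apply/bigcupP; exists b.
    by move: (disjointFr bheavy yb); rewrite inE yP /= => /negbT; rewrite -leqNgt.
  apply/eqP; rewrite eqn0Ngt; apply/negP => zpos; rewrite eq_sym in zy.
  exact: (no_two_private_points (k := 4) isT packB ppcP maxP bP yb zb zy ylarge zpos).
apply: leq_trans (_ : \sum_(y in b) 4 <= 16); first by apply: leq_sum => y /small; rewrite -leqNgt.
by rewrite sum_nat_const (packing_card packB bB).
Qed.

Lemma touching_block_subset b : b \in P ->
  [set C in B | ~~ [disjoint C & b]] \subset b |: ((\bigcup_(y in b) privB y) :|:
    \bigcup_(y in b) [set C in B | (y \in C) && ~~ [disjoint C & cover P :\: b]]).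
Proof.
move=> bP; have /is_ppcP[/subsetP sPB _] := ppcP; have bB := sPB b bP.
have sbP : b \subset cover P by apply: bigcup_sup.
apply/subsetP => C; rewrite inE => /andP[CB]; rewrite -setI_eq0 => /set0Pn[t].
rewrite inE => /andP[tC tb]; rewrite !inE; have [-> // | Cb] := eqVneq C b; rewrite /=.
have [CS | CS] := boolP [disjoint C & cover P :\: b]; last first.
  by apply/orP; right; apply/bigcupP; exists t => //; rewrite inE CB tC CS.
apply/orP; left; apply/bigcupP; exists t => //; rewrite inE CB /=.
apply/eqP/setP => s; rewrite !inE; apply/andP/eqP => [[sC sP] | ->]; last first.
  by rewrite tC (subsetP sbP).
have [sb | sNb] := boolP (s \in b); last by move: (disjointFr CS sC); rewrite inE sNb sP.
apply/eqP; apply: contraNT Cb => st.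
by rewrite (packing_pair packB st CB bB sC tC sb tb).
Qed.

Lemma card_touching_light b : b \in light -> #|[set C in B | ~~ [disjoint C & b]]| <= 65.
Proof.
move=> bL; have bP : b \in P := subsetP light_subset b bL.
have /is_ppcP[sPB _] := ppcP; have bB := subsetP sPB b bP.
have cardS : #|cover P :\: b| <= 12.
  have := card_cover_packing packB sPB; rewrite cardP cardsD (setIidPr (bigcup_sup _ bP)).
  by rewrite (packing_card packB bB); clear; lia.
apply: leq_trans (subset_leq_card (touching_block_subset bP)) _.
rewrite (leq_trans (leq_card_setU _ _)) // cards1 add1n ltnS.
rewrite (leq_trans (leq_card_setU _ _)) // -[64]/(16 + 4 * 12) leq_add //.
  exact: leq_trans (card_bigcup_leq _ _) (sum_private_light bL).
rewrite (leq_trans (card_bigcup_leq _ _)) // (@leq_trans (\sum_(y in b) 12)) //.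
  apply: leq_sum => y yb; apply: leq_trans _ cardS.
  by rewrite (card_blocks_through_meeting packB) // inE yb.
by rewrite sum_nat_const (packing_card packB bB).
Qed.

Lemma card_meeting_heavy :
  3 * #|[set C in B | ~~ [disjoint C & heavy]]| <= #|heavy| * (v - #|heavy|) + 3.
Proof.
set inside := [set C in B | C \subset heavy].
have card_inside : #|inside| <= 1.
  have card_heavy : #|heavy| <= 4 by apply: leq_trans card_heavy_light; apply: leq_addr.
  apply/card_le1_eqP => C1 C2; rewrite !inE => /andP[C1B C1h] /andP[C2B C2h].
  have heavyE C : C \in B -> C \subset heavy -> C = heavy.
    by move=> CB Ch; apply/eqP; rewrite eqEcard Ch (packing_card packB CB) card_heavy.
  by rewrite (heavyE C1 C1B C1h) (heavyE C2 C2B C2h).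
set cross := [set C in B | ~~ [disjoint C & heavy] & ~~ (C \subset heavy)].
have meetingE : [set C in B | ~~ [disjoint C & heavy]] \subset cross :|: inside.
  apply/subsetP => C; rewrite !inE => /andP[CB Ch]; rewrite CB Ch /=.
  by case: (C \subset heavy).
apply: (@leq_trans (3 * (#|cross| + #|inside|))).
  by rewrite leq_mul2l (leq_trans (subset_leq_card meetingE)) ?leq_card_setU ?orbT.
rewrite mulnDr leq_add ?(packing_cross_pairs packB heavy) //.
exact: leq_mul (leqnn 3) card_inside.
Qed.

Lemma card_packing_max_ppc4 : 200 <= v -> 3 * #|B| <= 4 * v - 10.
Proof.
move=> v200; set M := [set C in B | ~~ [disjoint C & heavy]].
have BE : B \subset M :|: \bigcup_(b in light) [set C in B | ~~ [disjoint C & b]].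
  apply/subsetP => C CB; rewrite inE.
  case/orP: (block_meets_heavy_or_light CB) => [Ch | /exists_inP[b bL bC]].
    by rewrite inE CB Ch.
  by apply/orP; right; apply/bigcupP; exists b => //; rewrite inE CB disjoint_sym.
have cardB : #|B| <= #|M| + 65 * #|light|.
  rewrite (leq_trans (subset_leq_card BE)) // (leq_trans (leq_card_setU _ _)) // leq_add2l.
  rewrite (leq_trans (card_bigcup_leq _ _)) // mulnC -sum_nat_const leq_sum //.
  exact: card_touching_light.
have := card_meeting_heavy; have := card_heavy_light.
move: cardB v200; clear; move: #|heavy| #|light| #|M| #|B| => r l m n.
(* splitting on r <= 4 makes r * (v - r) linear *)
case: r => [|[|[|[|[|r]]]]]; lia.
Qed.

End UpperBound.

(* Points 0..3 are hubs and grid_point m i g is the point g < m of the i-th copy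
   of Z_m; the line of slope a through t is {a} plus t + i * a in copy i < 3. *)
Definition grid_point m i g := 4 + i * m + g.

Definition line_points m a t : seq nat :=
  a :: [seq grid_point m i ((t + i * a) %% m) | i <- iota 0 3].

Section GridLines.
Variable m : nat.
Hypothesis m_gt6 : 6 < m.

Let m_gt0 : 0 < m. Proof. exact: ltn_trans m_gt6. Qed.

Lemma grid_point_inj i i' g g' : g < m -> g' < m ->
  grid_point m i g = grid_point m i' g' -> i = i' /\ g = g'.
Proof.
move=> gm g'm /eqP; rewrite /grid_point -!addnA eqn_add2l => /eqP E.
have := congr1 (divn^~ m) E; have := congr1 (modn^~ m) E.
by rewrite /= !modnMDl !divnMDl // !modn_small // !divn_small // !addn0 => -> ->.
Qed.

Lemma mem_line_points k a t : k \in line_points m a t ->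
  k = a \/ exists2 i, i < 3 & k = grid_point m i ((t + i * a) %% m).
Proof.
rewrite inE => /predU1P[-> | /mapP[i]]; [by left | rewrite mem_iota => /andP[_ i3] ->].
by right; exists i.
Qed.

Lemma line_points_meet k a a' t t' : a < 4 -> a' < 4 ->
  k \in line_points m a t -> k \in line_points m a' t' ->
  (k = a /\ a = a') \/
  exists2 i, i < 3 & k = grid_point m i ((t + i * a) %% m) /\ t + i * a = t' + i * a' %[mod m].
Proof.
move=> a4 a'4 /mem_line_points[-> | [i i3 ->]] /mem_line_points[E | [i' i'3 E]].
- by left.
- by move: a4; rewrite E /grid_point; clear; lia.
- by move: a'4; rewrite -E /grid_point; clear; lia.
have [<- eq_mod] := grid_point_inj (ltn_pmod _ m_gt0) (ltn_pmod _ m_gt0) E.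
by right; exists i.
Qed.

Lemma grid_slopes_eq i j a a' t t' : i < j < 3 -> a < 4 -> a' < 4 ->
  t + i * a = t' + i * a' %[mod m] -> t + j * a = t' + j * a' %[mod m] -> a = a'.
Proof.
move=> /andP[ij j3] a4 a'4 Ei.
rewrite -(subnKC (ltnW ij)) !mulnDl !addnA -modnDml Ei modnDml => /eqP.
have small c : c < 4 -> (j - i) * c < m by move: m_gt6 j3; clear; nia.
by rewrite eqn_modDl !modn_small ?small // eqn_mul2l subn_eq0 leqNgt ij => /eqP.
Qed.

Lemma line_offsets_eq i a t t' : t < m -> t' < m ->
  t + i * a = t' + i * a %[mod m] -> t = t'.
Proof. by move=> tm t'm /eqP; rewrite eqn_modDr !modn_small // => /eqP. Qed.

Lemma line_points_pair x y a a' t t' : a < 4 -> a' < 4 -> t < m -> t' < m -> x != y ->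
  x \in line_points m a t -> y \in line_points m a t ->
  x \in line_points m a' t' -> y \in line_points m a' t' -> a = a' /\ t = t'.
Proof.
move=> a4 a'4 tm t'm xy x1 y1 x2 y2.
have offsets i : a = a' -> t + i * a = t' + i * a' %[mod m] -> a = a' /\ t = t'.
  by move=> aa' Ei; split=> //; rewrite -aa' in Ei; apply: line_offsets_eq Ei.
case: (line_points_meet a4 a'4 x1 x2) => [[xa aa'] | [i i3 [xE Ei]]];
case: (line_points_meet a4 a'4 y1 y2) => [[ya aa''] | [j j3 [yE Ej]]].
- by rewrite xa ya eqxx in xy.
- exact: offsets aa' Ej.
- exact: offsets aa'' Ei.
apply: (offsets i _ Ei); case: (ltngtP i j) => [ij | ji | ij].
- by apply: (grid_slopes_eq _ a4 a'4 Ei Ej); rewrite ij.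
- by apply: (grid_slopes_eq _ a4 a'4 Ej Ei); rewrite ji.
by rewrite xE yE ij eqxx in xy.
Qed.

Lemma line_points_uniq a t : a < 4 -> uniq (line_points m a t).
Proof.
move=> a4.
rewrite cons_uniq map_inj_in_uniq ?iota_uniq ?andbT.
  by apply/mapP => -[i _ E]; move: a4; rewrite E /grid_point; clear; lia.
by move=> i j _ _ /(grid_point_inj (ltn_pmod _ m_gt0) (ltn_pmod _ m_gt0))[].
Qed.

Lemma line_points_bounded N a t : a < 4 -> 4 + 3 * m <= N ->
  all (fun k => k < N) (line_points m a t).
Proof.
move=> a4 mN; apply/allP => k /mem_line_points[-> | [i i3 ->]].
  by move: a4 mN; clear; lia.
by have := ltn_pmod (t + i * a) m_gt0; move: i3 mN; rewrite /grid_point; clear; nia.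
Qed.

Lemma diagonal_lines_meet k a a' : 16 <= m -> a < 4 -> a' < 4 ->
  k \in line_points m a (3 * a) -> k \in line_points m a' (3 * a') -> a = a'.
Proof.
move=> m16 a4 a'4 k1 k2.
case: (line_points_meet a4 a'4 k1 k2) => [[_ //] | [i i3 [_]]].
have small c : c < 4 -> (3 + i) * c < m by move: m16 i3; clear; nia.
by rewrite -!mulnDl !modn_small ?small // => /eqP; rewrite eqn_mul2l => /eqP.
Qed.

End GridLines.

Definition ord_set N (s : seq nat) : {set 'I_N} := [set x : 'I_N | val x \in s].

Lemma card_ord_set N s : uniq s -> all (fun k => k < N) s -> #|ord_set N s| = size s.
Proof.
move=> s_uniq /allP s_lt; rewrite cardE -(size_map val); apply/perm_size/uniq_perm => //.
  by rewrite map_inj_uniq ?enum_uniq //; apply: val_inj.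
move=> k; apply/mapP/idP => [[x] | ks]; first by rewrite mem_enum inE => xs ->.
by exists (Ordinal (s_lt k ks)); rewrite // mem_enum inE.
Qed.

Section GridPacking.
Variables (N m : nat).
Hypotheses (m_ge16 : 16 <= m) (mN : 4 + 3 * m <= N).

Definition hub_block := ord_set N (iota 0 4).
Definition line_block a t := ord_set N (line_points m a t).
Definition grid_packing := hub_block |: [set line_block p.1 p.2 | p : 'I_4 * 'I_m].

Let m_gt6 : 6 < m. Proof. exact: leq_trans m_ge16. Qed.

Lemma mem_hub_block x : (x \in hub_block) = (val x < 4).
Proof. by rewrite in_set mem_iota. Qed.

Lemma card_hub_block : #|hub_block| = 4.
Proof. by rewrite card_ord_set ?iota_uniq //=; move: mN; clear; lia. Qed.

Lemma card_line_block a t : a < 4 -> #|line_block a t| = 4.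
Proof.
by move=> a4; rewrite card_ord_set ?(line_points_uniq m_gt6) ?(line_points_bounded m_gt6).
Qed.

Lemma line_block_hub a t x : a < 4 -> x \in line_block a t -> val x < 4 -> val x = a.
Proof.
move=> a4; rewrite in_set => /mem_line_points[// | [i _ ->]].
by rewrite /grid_point; clear; lia.
Qed.

Lemma line_block_pair (p p' : 'I_4 * 'I_m) x y : x != y ->
  x \in line_block p.1 p.2 -> y \in line_block p.1 p.2 ->
  x \in line_block p'.1 p'.2 -> y \in line_block p'.1 p'.2 -> p = p'.
Proof.
case: p p' => [a t] [a' t']; rewrite -(inj_eq val_inj) !in_set /= => xy x1 y1 x2 y2.
have [] := line_points_pair m_gt6 (ltn_ord a) (ltn_ord a') (ltn_ord t) (ltn_ord t') xy x1 y1 x2 y2.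
by move=> /val_inj -> /val_inj ->.
Qed.

Lemma line_block_inj : injective (fun p : 'I_4 * 'I_m => line_block p.1 p.2).
Proof.
move=> p p' E; have /card_gt1P[x [y [x1 y1 xy]]] : 1 < #|line_block p.1 p.2|.
  by rewrite card_line_block.
have E' : line_block p.1 p.2 = line_block p'.1 p'.2 := E.
by apply: (line_block_pair (p := p) (p' := p') xy x1 y1); rewrite -E'.
Qed.

Lemma grid_packing_blocks b : b \in grid_packing ->
  b = hub_block \/ exists p : 'I_4 * 'I_m, b = line_block p.1 p.2.
Proof. by case/setU1P => [|/imsetP[p _ ->]]; [left | right; exists p]. Qed.

Lemma line_block_hub_pair (p : 'I_4 * 'I_m) x y : x != y ->
  x \in hub_block -> y \in hub_block ->
  x \in line_block p.1 p.2 -> y \in line_block p.1 p.2 -> False.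
Proof.
rewrite !mem_hub_block -(inj_eq val_inj) => xy x4 y4 x1 y1.
by rewrite (line_block_hub (ltn_ord _) x1 x4) (line_block_hub (ltn_ord _) y1 y4) eqxx in xy.
Qed.

Lemma card_grid_packing : #|grid_packing| = 4 * m + 1.
Proof.
rewrite cardsU1 card_imset; last exact: line_block_inj.
rewrite card_prod !card_ord addnC; congr (_ + _); apply/eqP; rewrite eqb1.
apply/imsetP => -[p _ hubE]; have /card_gt1P[x [y [x1 y1 xy]]] : 1 < #|hub_block|.
  by rewrite card_hub_block.
by apply: (line_block_hub_pair (p := p) xy x1 y1); rewrite -hubE.
Qed.

Lemma grid_packing_pair x y b1 b2 : x != y -> b1 \in grid_packing -> b2 \in grid_packing ->
  x \in b1 -> y \in b1 -> x \in b2 -> y \in b2 -> b1 = b2.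
Proof.
move=> xy /grid_packing_blocks[-> | [p ->]] /grid_packing_blocks[-> | [p' ->]] // x1 y1 x2 y2.
- by case: (line_block_hub_pair xy x1 y1 x2 y2).
- by case: (line_block_hub_pair xy x2 y2 x1 y1).
by rewrite (line_block_pair xy x1 y1 x2 y2).
Qed.

Lemma is_packing_grid : is_packing 4 grid_packing.
Proof.
apply/andP; split.
  apply/forall_inP => b /grid_packing_blocks[-> | [p ->]].
    by rewrite card_hub_block.
  by rewrite card_line_block ?ltn_ord.
apply/forallP => x; apply/forallP => y; apply/implyP => xy.
apply/card_le1_eqP => b1 b2 /setIdP[b1G /andP[x1 y1]] /setIdP[b2G /andP[x2 y2]].
exact: grid_packing_pair xy b2G b1G x2 y2 x1 y1.
Qed.

Lemma grid_block_meets_hub b : b \in grid_packing -> 0 < #|b :&: hub_block|.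
Proof.
case/grid_packing_blocks => [-> | [[a t] ->]]; first by rewrite setIid card_hub_block.
have aN : a < N by apply: leq_trans (ltn_ord a) (leq_trans (leq_addr _ _) mN).
apply/card_gt0P; exists (Ordinal aN).
by rewrite inE mem_hub_block /= ltn_ord andbT in_set inE eqxx.
Qed.

Lemma diagonal_blocks_meet (a a' : 'I_4) x :
  x \in line_block a (3 * a) -> x \in line_block a' (3 * a') -> a = a'.
Proof. by rewrite !in_set => x1 x2; apply/val_inj/(diagonal_lines_meet m_gt6 m_ge16 _ _ x1 x2). Qed.

Lemma max_ppc_size_grid : max_ppc_size grid_packing = 4.
Proof.
apply/eqP; rewrite eqn_leq; apply/andP; split.
  apply/bigmax_leqP => R /is_ppcP[/subsetP sRG /trivIsetP disjR].
  rewrite -card_hub_block -[#|R|]mul1n.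
  apply: (leq_mul_card_disjoint (f := fun b => b :&: hub_block)) => [b1 b2 b1R b2R b12||b /sRG].
  - by apply: disjointW (disjR _ _ b1R b2R b12); apply: subsetIl.
  - by move=> b _; apply: subsetIr.
  exact: grid_block_meets_hub.
set diag := [set line_block a (3 * a) | a : 'I_4].
have diag_ppc : is_ppc grid_packing diag.
  apply/is_ppcP; split.
    apply/subsetP => _ /imsetP[a _ ->]; rewrite setU1r //.
    have a3m : 3 * a < m by move: (ltn_ord a) m_ge16; clear; lia.
    by apply/imsetP; exists (a, Ordinal a3m).
  apply/trivIsetP => _ _ /imsetP[a _ ->] /imsetP[a' _ ->] aa'.
  by apply/disjointP => x x1 x2; rewrite (diagonal_blocks_meet x1 x2) eqxx in aa'.
have card_diag : #|diag| = 4.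
  rewrite card_imset ?card_ord // => a a' E.
  have /card_gt0P[x x1] : 0 < #|line_block a (3 * a)| by rewrite card_line_block.
  have E' : line_block a (3 * a) = line_block a' (3 * a') := E.
  by apply: (diagonal_blocks_meet x1); rewrite -E'.
by rewrite -card_diag leq_max_ppc_size.
Qed.

Lemma grid_beta_lower : 4 * m + 1 <= beta 4 N 4.
Proof.
rewrite -card_grid_packing; apply: leq_bigmax_cond.
by rewrite is_packing_grid max_ppc_size_grid eqxx.
Qed.

End GridPacking.

Unset Implicit Arguments.

Theorem theorem4p4 (v : nat) : 240 <= v ->
  beta 4 v 4 <= (4 * v - 10) %/ 3 /\
  (v %% 3 = 0 -> (4 * v - 21) %/ 3 <= beta 4 v 4) /\
  (v %% 3 = 1 -> (4 * v - 13) %/ 3 <= beta 4 v 4) /\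
  (v %% 3 = 2 -> (4 * v - 17) %/ 3 <= beta 4 v 4).
Proof.
move=> v240; split.
  apply/bigmax_leqP => B /andP[packB /eqP maxB].
  have [P ppcP cardP] := exists_max_ppc B.
  have maxP R : is_ppc B R -> #|R| <= #|P| by rewrite cardP; apply: leq_max_ppc_size.
  rewrite leq_divRL // [_ * 3]mulnC.
  by apply: card_packing_max_ppc4 packB ppcP _ maxP _; rewrite ?cardP ?maxB ?(leq_trans _ v240).
have lower := @grid_beta_lower v ((v - 4) %/ 3).
move: (beta 4 v 4) lower => b lower.
by split; [|split] => vmod; apply: leq_trans (lower _ _); move: v240 vmod; clear; lia.
Qed.
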